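(* Let $\{\mathsf{P}_\theta : \theta \in \mathbb{T}\}$ be a statistical model for data $Y$ taking values in $\mathbb{Y}$, with likelihood $\theta \mapsto L_y(\theta)$ and maximum likelihood estimator $\hat\theta_y$ existing for each $y$. Let $R(y,\theta) = L_y(\theta)/L_y(\hat\theta_y)$, let $\pi_y(\theta) = \mathsf{P}_\theta\{R(Y,\theta) \le R(y,\theta)\}$, and define $\overline{\Pi}_y(H) = \sup_{\theta \in H} \pi_y(\theta)$ and $\underline{\Pi}_y(H) = 1 - \overline{\Pi}_y(H^c)$ for $H \subseteq \mathbb{T}$. Then the following uniform validity property holds: \[ \sup_{\Theta \in \mathbb{T}} \mathsf{P}_\Theta\Big( \bigcup_{H \subseteq \mathbb{T}:\, H \ni \Theta} \{ \overline{\Pi}_Y(H) \le \alpha \} \Big) \le \alpha, \quad \alpha \in [0,1], \] i.e., the probability that $\overline{\Pi}_Y(H) \le \alpha$ for some true hypothesis $H \ni \Theta$ is at most $\alpha$. Equivalently, \[ \sup_{\Theta \in \mathbb{T}} \mathsf{P}_\Theta\Big( \bigcup_{H \subseteq \mathbb{T}:\, H \not\ni \Theta} \{ \underline{\Pi}_Y(H) \ge 1-\alpha \} \Big) \le \alpha, \quad \alpha \in [0,1], \] i.e., the probability that $\underline{\Pi}_Y(H) \ge 1-\alpha$ for some false hypothesis $H \not\ni \Theta$ is at most $\alpha$.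
   Context: Here $\Theta$ denotes the true parameter value and $Y \sim \mathsf{P}_\Theta$. The pair $(\underline{\Pi}_y, \overline{\Pi}_y)$ is the necessity–possibility measure pair (the inferential model output) determined by the possibility contour $\pi_y$; the union is over all subsets $H$ of the parameter space $\mathbb{T}$ satisfying the stated membership condition. *)

From HB Require Import structures.
From mathcomp Require Import all_boot all_order all_algebra.
From mathcomp Require Import all_classical all_reals all_analysis.
Set Implicit Arguments. Unset Strict Implicit. Unset Printing Implicit Defensive.
Import Order.TTheory GRing.Theory Num.Theory.
Local Open Scope classical_set_scope.
Local Open Scope ring_scope.
Local Open Scope ereal_scope.

Section IM.
Context {d : measure_display} {Y : measurableType d} {R : realType} {T : Type}.

Definition rel_lik (L : Y -> T -> R) (thetahat : Y -> T) (y : Y) (t : T) : R :=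
  (L y t / L y (thetahat y))%R.

Definition contour (P : T -> probability Y R) (L : Y -> T -> R)
  (thetahat : Y -> T) (y : Y) (t : T) : \bar R :=
  P t [set y' | (rel_lik L thetahat y' t <= rel_lik L thetahat y t)%R].

(* upper possibility Π̄_y(H) = sup_{θ ∈ H} π_y(θ), with sup ∅ = 0 *)
Definition upper_poss P L thetahat (y : Y) (H : set T) : \bar R :=
  ereal_sup ([set 0] `|` [set contour P L thetahat y t | t in H]).

Definition lower_nec P L thetahat (y : Y) (H : set T) : \bar R :=
  1 - upper_poss P L thetahat y (~` H).

End IM.

From HB Require Import structures.
From mathcomp Require Import all_boot all_order all_algebra.
From mathcomp Require Import all_classical all_reals all_analysis.
Import Order.TTheory GRing.Theory Num.Theory.
Local Open Scope classical_set_scope.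
Local Open Scope ring_scope.
Local Open Scope ereal_scope.

(* The event that some true hypothesis H gets upper possibility at most alpha
   is exactly the event {pi_Y(Theta) <= alpha}: take H = {Theta}.  And
   pi_Y(Theta) = F(S(Y)) with S = R(., Theta) and F the distribution function
   of S(Y) under P_Theta, so by the probability integral transform
   P_Theta{F(S(Y)) <= alpha} <= alpha.  The necessity statement is the same
   event read through H |-> ~` H. *)

Lemma nondecreasing_cofinal_seq {R : realType} (V : set R) : V !=set0 ->
  exists s : R ^nat, [/\ nondecreasing_seq s,
    forall n, exists2 v, V v & (s n <= v)%R
    & forall v, V v -> exists n, (v <= s n)%R].
Proof.
move=> [v0 Vv0].
have [ubV|unbV] := pselect (has_ubound V); last first.
  exists (fun n => n%:R); split.
  - by move=> n m nm; rewrite ler_nat.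
  - move=> n; have [//|noV] := pselect (exists2 v, V v & (n%:R <= v)%R).
    exfalso; apply: unbV; exists n%:R => v Vv.
    by rewrite leNgt; apply/negP => /ltW nv; apply: noV; exists v.
  - move=> v _; exists (Num.bound `|v|).
    exact: le_trans (ler_norm _) (ltW (archi_boundP _)).
have supV : has_sup V by split => //; exists v0.
have [Vsup|nVsup] := pselect (V (sup V)).
  exists (fun=> sup V); split => [n m _|n|v Vv].
  - exact: lexx.
  - by exists (sup V).
  - by exists 0%N; exact: sup_upper_bound.
exists (fun n => sup V - n.+1%:R^-1)%R; split.
- by move=> n m nm; rewrite lerD2l lerN2 lef_pV2 ?posrE ?ler_nat.
- move=> n; have inv_gt0 : (0 < n.+1%:R^-1 :> R)%R by rewrite invr_gt0.
  by have [v Vv /ltW ltv] := sup_adherent inv_gt0 supV; exists v.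
- move=> v Vv; have : (v < sup V)%R.
    rewrite lt_neqAle sup_upper_bound // andbT.
    by apply: contraPneq nVsup => <-.
  by move=> /ltr_add_invr[k ltk]; exists k; rewrite lerBrDr ltW.
Qed.

Section integral_transform.
Context d (Y : measurableType d) (R : realType).

Lemma measurable_sublevel (S : Y -> R) (s : R) :
  measurable_fun setT S -> measurable [set y | (S y <= s)%R].
Proof.
move=> mS; have := mS measurableT _ (measurable_itv `]-oo, s]).
rewrite setTI; congr measurable; apply/seteqP; split => y /=;
  by rewrite in_itv /= ?andbT.
Qed.

Lemma measure_bigcup_nondecreasing_le (mu : {measure set Y -> \bar R})
    (B : (set Y) ^nat) (a : \bar R) :
  (forall n, measurable (B n)) -> nondecreasing_seq B ->
  (forall n, mu (B n) <= a) -> mu (\bigcup_n B n) <= a.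
Proof.
move=> mB ndB muBa.
have mUB : measurable (\bigcup_n B n) by exact: bigcup_measurable.
have cvB := nondecreasing_cvg_mu (mu := mu) mB mUB ndB.
rewrite -(cvg_lim _ cvB) //; apply: lime_le; last exact: nearW.
by apply/cvg_ex; exists (mu (\bigcup_n B n)).
Qed.

Lemma probability_integral_transform_le (Pr : probability Y R) (S : Y -> R)
    (a : R) : measurable_fun setT S -> (0 <= a)%R ->
  Pr [set y | Pr [set y' | (S y' <= S y)%R] <= a%:E] <= a%:E.
Proof.
move=> mS a0; set A := [set y | _ <= _].
have [[y0 Ay0]|noA] := pselect (A !=set0); last first.
  rewrite (_ : A = set0) ?measure0 ?lee_fin //.
  by apply/seteqP; split => y // Ay; apply: noA; exists y.
have cdf_le s t : (s <= t)%R ->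
    Pr [set y | (S y <= s)%R] <= Pr [set y | (S y <= t)%R].
  move=> st; apply: le_measure; rewrite ?inE; try exact: measurable_sublevel.
  by move=> y /= Sys; exact: le_trans st.
have SA0 : S @` A !=set0 by exists (S y0), y0.
have [s [nds below cofinal]] := nondecreasing_cofinal_seq _ SA0.
have -> : A = \bigcup_n [set y | (S y <= s n)%R].
  apply/seteqP; split => y.
    by move=> Ay; have [n ?] := cofinal (S y) (ex_intro2 _ _ y Ay erefl); exists n.
  move=> [n _ /= Sys]; have [_ [y' Ay' <-] sSy'] := below n.
  exact: le_trans (cdf_le _ _ (le_trans Sys sSy')) Ay'.
apply: measure_bigcup_nondecreasing_le => [n|n m nm|n].
- exact: measurable_sublevel.
- by apply/subsetPset => y /= Sys; exact: le_trans (nds _ _ nm).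
- by have [_ [y' Ay' <-] sSy'] := below n; exact: le_trans (cdf_le _ _ sSy') Ay'.
Qed.

End integral_transform.

Lemma lee_finB2l (R : realDomainType) (c x : R) (u : \bar R) :
  ((c - x)%:E <= c%:E - u) = (u <= x%:E).
Proof.
by case: u => [r| |] //=; rewrite ?leNye ?leey // !lee_fin lerD2l lerN2.
Qed.

Section inferential_model.
Context d (Y : measurableType d) (R : realType) (T : Type).
Variables (P : T -> probability Y R) (L : Y -> T -> R) (thetahat : Y -> T).
Local Notation contour := (contour P L thetahat).
Local Notation upper_poss := (upper_poss P L thetahat).
Local Notation lower_nec := (lower_nec P L thetahat).

Lemma contour_le_upper_poss y (H : set T) t : H t ->
  contour y t <= upper_poss y H.
Proof. by move=> Ht; apply: ereal_sup_ubound; right; exists t. Qed.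

Lemma upper_poss_set1 y t : upper_poss y [set t] = contour y t.
Proof.
apply/eqP; rewrite eq_le contour_le_upper_poss // andbT.
by apply: ge_ereal_sup => _ [->|[_ -> <-]] //; exact: measure_ge0.
Qed.

Lemma upper_poss_event t (x : \bar R) :
  [set y | exists H : set T, H t /\ upper_poss y H <= x] =
  [set y | contour y t <= x].
Proof.
apply/seteqP; split => y /=.
  by move=> [H [Ht le_x]]; apply: le_trans le_x; exact: contour_le_upper_poss.
by move=> le_x; exists [set t]; rewrite upper_poss_set1.
Qed.

Lemma lower_nec_event t (x : R) :
  [set y | exists H : set T, ~ H t /\ (1 - x)%:E <= lower_nec y H] =
  [set y | contour y t <= x%:E].
Proof.
rewrite -upper_poss_event; apply/seteqP; split => y /=.
  by move=> [H [nHt]]; rewrite lee_finB2l => le_x; exists (~` H).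
move=> [H [Ht le_x]]; exists (~` H); split; first by move/(_ Ht).
by rewrite /lower_nec setCK lee_finB2l.
Qed.

End inferential_model.

Theorem corollary2 (d : measure_display) (Y : measurableType d) (R : realType)
  (T : Type) (P : T -> probability Y R)
  (mu : {measure set Y -> \bar R}) (L : Y -> T -> R) (thetahat : Y -> T) :
  (* L is the likelihood: density of P_θ w.r.t. the dominating measure mu *)
  (forall y t, (0 <= L y t)%R) ->
  (forall t, measurable_fun setT (fun y => L y t)) ->
  (forall t A, measurable A -> P t A = \int[mu]_(y in A) (L y t)%:E) ->
  (* thetahat is a maximum likelihood estimator *)
  (forall y t, (L y t <= L y (thetahat y))%R) ->
  (* the relative likelihood statistic is measurable for each θ *)
  (forall t, measurable_fun setT (fun y => rel_lik L thetahat y t)) ->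
  forall alpha : R, (0 <= alpha <= 1)%R ->
    ereal_sup [set P Th [set y | exists H : set T,
                   H Th /\ upper_poss P L thetahat y H <= alpha%:E] | Th in setT]
      <= alpha%:E
    /\
    ereal_sup [set P Th [set y | exists H : set T,
                   ~ H Th /\ lower_nec P L thetahat y H >= (1 - alpha)%:E] | Th in setT]
      <= alpha%:E.
Proof.
move=> _ _ _ _ mrel alpha /andP[alpha0 _].
have valid Th : P Th [set y | contour P L thetahat y Th <= alpha%:E] <= alpha%:E.
  exact: probability_integral_transform_le (mrel Th) alpha0.
by split; apply: ge_ereal_sup => _ [Th _ <-];
  rewrite ?upper_poss_event ?lower_nec_event; exact: valid.
Qed.
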